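(* If $M\rightarrow_v N$, $t$ is a canonical term of $\Phi$ and $\langle\!\langle t\rangle\!\rangle=M$, then $t\rightarrow u$ in $\Phi$ for some term $u$ with $\langle\!\langle u\rangle\!\rangle=N$.
   Context: $\lambda$-terms: $M::=x\mid\lambda x.M\mid MN$, variables from a set $\Upsilon$ with a fixed total order, $FV(M)$ the ordered sequence of free variables. Values $V::=x\mid\lambda x.M$; weak call-by-value reduction $\rightarrow_v$: $(\lambda x.M)V\rightarrow_v M\{V/x\}$ for values $V$, closed under $ML$ and $LM$ contexts (no reduction under $\lambda$). $\Phi$: binary function symbol $\mathbf{app}$, constructors $c_{x,M}$ ($M$ a $\lambda$-term, $x\in\Upsilon$) of arity the length of $FV(\lambda x.M)$; $[\![x]\!]=x$, $[\![\lambda x.M]\!]=c_{x,M}(x_1,\dots,x_n)$ with $FV(\lambda x.M)=x_1,\dots,x_n$, $[\![MN]\!]=\mathbf{app}([\![M]\!],[\![N]\!])$; rules $\mathbf{app}(c_{x,M}(x_1,\dots,x_n),x)\rightarrow[\![M]\!]$; rewriting is call-by-value (a step replaces anywhere a subterm $l\sigma$ by $r\sigma$, $\sigma$ mapping variables to constructor terms, i.e. closed terms built only from constructors). $\langle\!\langle x\rangle\!\rangle=x$, $\langle\!\langle\mathbf{app}(u,v)\rangle\!\rangle=\langle\!\langle u\rangle\!\rangle\langle\!\langle v\rangle\!\rangle$, $\langle\!\langle c_{x,M}(t_1,\dots,t_n)\rangle\!\rangle=(\lambda x.M)\{\langle\!\langle t_1\rangle\!\rangle/x_1,\dots,\langle\!\langle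 t_n\rangle\!\rangle/x_n\}$. A closed term $t$ is canonical if it is a constructor term or $t=\mathbf{app}(u,v)$ with $u,v$ canonical. *)

From mathcomp Require Import all_boot.
Set Implicit Arguments. Unset Strict Implicit. Unset Printing Implicit Defensive.

(* Variables: the set Upsilon is nat, totally ordered by leq. *)

Inductive lam : Type :=
| Var : nat -> lam
| Lam : nat -> lam -> lam
| Ap  : lam -> lam -> lam.

Fixpoint fv (M : lam) : seq nat :=
  match M with
  | Var x => [:: x]
  | Lam x P => filter (fun y => y != x) (fv P)
  | Ap P Q => fv P ++ fv Q
  end.

Definition FV (M : lam) : seq nat := sort leq (undup (fv M)).

(* simultaneous substitution; only ever applied with closed terms in the
   range on relevant variables, where it coincides with capture-avoiding
   substitution *)
Fixpoint msubst (f : nat -> lam) (M : lam) : lam :=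
  match M with
  | Var y => f y
  | Lam y P => Lam y (msubst (fun z => if z == y then Var z else f z) P)
  | Ap P Q => Ap (msubst f P) (msubst f Q)
  end.

Definition subst1 (x : nat) (V : lam) (M : lam) : lam :=
  msubst (fun z => if z == x then V else Var z) M.

Definition is_value (M : lam) : bool :=
  match M with Var _ | Lam _ _ => true | Ap _ _ => false end.

Inductive cbv : lam -> lam -> Prop :=
| cbv_beta x M V : is_value V -> cbv (Ap (Lam x M) V) (subst1 x V M)
| cbv_appL M M' L : cbv M M' -> cbv (Ap M L) (Ap M' L)
| cbv_appR M M' L : cbv M M' -> cbv (Ap L M) (Ap L M').

(* C x M ts  is  c_{x,M}(ts);  App u v  is  app(u,v) *)
Inductive tm : Type :=
| V : nat -> tm
| App : tm -> tm -> tm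
| C : nat -> lam -> seq tm -> tm.

Fixpoint is_cterm (t : tm) : bool :=
  match t with
  | V _ => false
  | App _ _ => false
  | C x M ts => (size ts == size (FV (Lam x M))) && all is_cterm ts
  end.

Fixpoint canonical (t : tm) : bool :=
  match t with
  | App u v => canonical u && canonical v
  | _ => is_cterm t
  end.

Fixpoint enc (M : lam) : tm :=
  match M with
  | Var x => V x
  | Lam x P => C x P (map V (FV (Lam x P)))
  | Ap P Q => App (enc P) (enc Q)
  end.

Fixpoint tsubst (s : nat -> tm) (t : tm) : tm :=
  match t with
  | V x => s x
  | App u v => App (tsubst s u) (tsubst s v)
  | C x M ts => C x M (map (tsubst s) ts)
  end.

Definition assoc (xs : seq nat) (Ns : seq lam) (z : nat) : lam :=
  let i := index z xs in if i < size xs then nth (Var z) Ns i else Var z.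

Fixpoint dec (t : tm) : lam :=
  match t with
  | V x => Var x
  | App u v => Ap (dec u) (dec v)
  | C x M ts => msubst (assoc (FV (Lam x M)) (map dec ts)) (Lam x M)
  end.

Definition rule_lhs (x : nat) (M : lam) : tm :=
  App (C x M (map V (FV (Lam x M)))) (V x).
Definition rule_rhs (x : nat) (M : lam) : tm := enc M.

Inductive step : tm -> tm -> Prop :=
| step_root x M (s : nat -> tm) :
    (forall y, is_cterm (s y)) ->
    step (tsubst s (rule_lhs x M)) (tsubst s (rule_rhs x M))
| step_appL u u' v : step u u' -> step (App u v) (App u' v)
| step_appR u v v' : step v v' -> step (App u v) (App u v')
| step_C x M ts1 t t' ts2 : step t t' ->
    step (C x M (ts1 ++ t :: ts2)) (C x M (ts1 ++ t' :: ts2)).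

From mathcomp Require Import all_boot.

(* A canonical term decoding to a beta-redex (\x.P) W is app(c_{x,P'}(ts), v)
   with v a constructor term, and it is the instance of the rule for c_{x,P'}
   under the substitution sending the i-th free variable of \x.P' to the i-th
   argument and x to v.  Decoding that instance of [[P']] substitutes the decoded
   arguments and <<v>> into P'; the decoded arguments are closed, so the result
   is exactly P{W/x}.  The congruence cases of ->_v are mirrored by the
   congruence steps of Phi. *)

Fixpoint AllP (P : tm -> Prop) (ts : seq tm) : Prop :=
  if ts is t :: ts' then P t /\ AllP P ts' else True.

Lemma AllP_nth {P ts} d i : AllP P ts -> i < size ts -> P (nth d ts i).
Proof. by elim: ts i => [|t ts IH] [|i] //= [Pt Pts] ?; auto. Qed.

Section NestedInduction.
Variable P : tm -> Prop.
Hypothesis P_V : forall n, P (V n).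
Hypothesis P_App : forall u v, P u -> P v -> P (App u v).
Hypothesis P_C : forall x M ts, AllP P ts -> P (C x M ts).

Fixpoint tm_nested_ind (t : tm) : P t :=
  match t with
  | V n => P_V n
  | App u v => @P_App u v (tm_nested_ind u) (tm_nested_ind v)
  | C x M ts => @P_C x M ts ((fix all_ind ts : AllP P ts :=
       if ts is t :: ts' then conj (tm_nested_ind t) (all_ind ts') else I) ts)
  end.
End NestedInduction.

Lemma eq_in_msubst M f g : {in fv M, f =1 g} -> msubst f M = msubst g M.
Proof.
elim: M f g => [y|y Q IH|P IHP Q IHQ] f g /= fg.
- by apply: fg; rewrite inE.
- congr Lam; apply: IH => z zQ; case: eqP => // /eqP zy.
  by apply: fg; rewrite mem_filter zy.
- by rewrite (IHP f g) ?(IHQ f g) // => z z_in; apply: fg; rewrite mem_cat z_in ?orbT.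
Qed.

Lemma msubst_var M : msubst Var M = M.
Proof.
elim: M => [y|y Q IH|P IHP Q IHQ] //=; last by rewrite IHP IHQ.
by congr Lam; rewrite -[RHS]IH; apply: eq_in_msubst => z _; case: eqP => [->|].
Qed.

Lemma msubst_closed f M : fv M = [::] -> msubst f M = M.
Proof. by move=> M0; rewrite -[RHS]msubst_var; apply: eq_in_msubst => z; rewrite M0. Qed.

Lemma mem_fv_msubst M f w :
  w \in fv (msubst f M) -> exists2 z, z \in fv M & w \in fv (f z).
Proof.
elim: M f => [y|y Q IH|P IHP Q IHQ] f /=.
- by exists y; rewrite ?inE.
- rewrite mem_filter => /andP[wy /IH[z zQ]].
  case: (eqVneq z y) => [-> /=|zy wz]; first by rewrite inE (negbTE wy).
  by exists z; rewrite // mem_filter zy.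
- rewrite mem_cat => /orP[/IHP[z zP wz]|/IHQ[z zQ wz]];
    by exists z; rewrite // mem_cat ?zP ?zQ ?orbT.
Qed.

(* Composition is only valid when [f] does not let [g] capture variables,
   which holds if each [f z] is a variable or closed. *)
Lemma msubst_comp M f g :
  (forall z, f z = Var z \/ fv (f z) = [::]) ->
  msubst g (msubst f M) = msubst (fun z => msubst g (f z)) M.
Proof.
elim: M f g => [y|y Q IH|P IHP Q IHQ] f g f_ok //=; last by rewrite IHP ?IHQ.
congr Lam; rewrite IH; last by move=> z; case: eqP => _; [left|].
apply: eq_in_msubst => z _; case: (eqVneq z y) => [->|zy] /=; first by rewrite eqxx.
by case: (f_ok z) => [-> /=|f0]; rewrite ?(negbTE zy) // !msubst_closed.
Qed.

Lemma mem_FV {x M z} : z \in fv (Lam x M) -> z \in FV (Lam x M).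
Proof. by rewrite /FV mem_sort mem_undup. Qed.

Lemma uniq_FV M : uniq (FV M).
Proof. by rewrite /FV sort_uniq undup_uniq. Qed.

Lemma notin_FV_Lam x M : x \notin FV (Lam x M).
Proof. by rewrite /FV mem_sort mem_undup /= mem_filter eqxx. Qed.

Lemma assoc_map_dec {xs ts z} d : size ts = size xs ->
  assoc xs (map dec ts) z = if z \in xs then dec (nth d ts (index z xs)) else Var z.
Proof.
move=> sz; rewrite /assoc index_mem; case: ifP => // z_xs.
by rewrite (nth_map d) // sz index_mem.
Qed.

Lemma fv_dec_cterm t : is_cterm t -> fv (dec t) = [::].
Proof.
elim/tm_nested_ind: t => // x M ts IH /andP[/eqP sz /all_nthP cts].
case E: (fv (dec (C x M ts))) => [|w ws] //.
have [z zM] : exists2 z, z \in fv (Lam x M) & w \in fv (assoc (FV (Lam x M)) (map dec ts) z).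
  by apply: mem_fv_msubst; change (w \in fv (dec (C x M ts))); rewrite E mem_head.
have z_FV := mem_FV zM; have z_ts : index z (FV (Lam x M)) < size ts.
  by rewrite sz index_mem.
by rewrite (assoc_map_dec (V 0) sz) z_FV (AllP_nth (V 0) _ IH z_ts) //; apply: cts.
Qed.

Lemma assoc_map_dec_cterm {xs ts z} : size ts = size xs -> all is_cterm ts ->
  assoc xs (map dec ts) z = Var z \/ fv (assoc xs (map dec ts) z) = [::].
Proof.
move=> sz /all_nthP cts; rewrite (assoc_map_dec (V 0) sz).
case: ifP => z_xs; [right|by left].
by apply/fv_dec_cterm/cts; rewrite sz index_mem.
Qed.

Lemma dec_tsubst_enc s M : dec (tsubst s (enc M)) = msubst (dec \o s) M.
Proof.
elim: M s => [y|y Q IH|P IHP Q IHQ] s //=; last by rewrite IHP IHQ.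
congr Lam; apply: eq_in_msubst => z zQ; case: (eqVneq z y) => // zy.
have z_FV : z \in FV (Lam y Q) by apply: mem_FV; rewrite /= mem_filter zy.
rewrite (assoc_map_dec (V 0)) ?size_map // z_FV -map_comp.
by rewrite (nth_map 0) ?index_mem // nth_index.
Qed.

Lemma map_nth_index (xs : seq nat) (ts : seq tm) d :
  uniq xs -> size ts = size xs -> map (fun z => nth d ts (index z xs)) xs = ts.
Proof.
move=> xs_uniq sz; apply: (@eq_from_nth _ d); rewrite size_map // => i i_xs.
by rewrite (nth_map 0) // index_uniq.
Qed.

Lemma step_root_beta x P ts v Q :
  is_cterm (C x P ts) -> is_cterm v -> dec (C x P ts) = Lam x Q ->
  exists2 u, step (App (C x P ts) v) u & dec u = subst1 x (dec v) Q.
Proof.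
rewrite /= => /andP[/eqP sz cts_b] cv [<-]; have /all_nthP cts := cts_b.
set xs := FV (Lam x P).
(* Indices out of range, in particular that of [x], fall back to the default [v]. *)
pose s w := nth v ts (index w xs).
have sx : s x = v by rewrite /s nth_default // sz memNindex ?notin_FV_Lam.
have s_cterm w : is_cterm (s w).
  by rewrite /s; case: (ltnP (index w xs) (size ts)) => [/cts|/(nth_default v)->].
exists (tsubst s (enc P)).
  have -> : App (C x P ts) v = tsubst s (rule_lhs x P).
    by rewrite /= -map_comp map_nth_index ?uniq_FV ?sx.
  exact: step_root.
rewrite dec_tsubst_enc /subst1 msubst_comp; last first.
  by move=> z; case: eqP => _; [left|exact: assoc_map_dec_cterm sz cts_b].
apply: eq_in_msubst => z zP /=; case: (eqVneq z x) => [->|zx]; first by rewrite sx /= eqxx.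
have z_xs : z \in xs by apply: mem_FV; rewrite /= mem_filter zx.
rewrite (assoc_map_dec v sz) z_xs msubst_closed //.
by apply/fv_dec_cterm/cts; rewrite sz index_mem.
Qed.

Lemma step_canonical_redex {t x P W} :
  canonical t -> dec t = Ap (Lam x P) W -> is_value W ->
  exists2 u, step t u & dec u = subst1 x W P.
Proof.
case: t => [|u v|] // /andP[cu cv] [decu <-].
case: v cv => [|v1 v2|z R rs] //= cv _.
case: u cu decu => [|u1 u2|y Q ts] //= cu [<- decQ].
by apply: step_root_beta; rewrite /= ?decQ.
Qed.

Theorem lemma7 (M N : lam) (t : tm) :
  cbv M N -> canonical t -> dec t = M ->
  exists u : tm, step t u /\ dec u = N.
Proof.
move=> MN; elim: MN t => [x P W W_val|L L' R _ IH|L L' R _ IH] t ct dect.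
- by have [u tu decu] := step_canonical_redex ct dect W_val; exists u.
- case: t ct dect => [|u v|] //= /andP[cu _] [/(IH u cu)[u' [uu' decu']] <-].
  by exists (App u' v); split; [apply: step_appL|rewrite /= decu'].
- case: t ct dect => [|u v|] //= /andP[_ cv] [<- /(IH v cv)[v' [vv' decv']]].
  by exists (App u v'); split; [apply: step_appR|rewrite /= decv'].
Qed.
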